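(* Let $n\ge 1$, let $w_n\ge\dots\ge w_1>0$ be real weights and let $B\in\{1,\dots,n\}$. Consider RLS (defined in the context) minimising the penalised fitness \[ f(x)=\sum_{i=1}^n w_i x_i+\max\{0,\,B-b(x)\}\cdot(n w_n+1),\qquad b(x)=\sum_{i=1}^n x_i . \] Starting with an arbitrary initial search point, the expected optimisation time of RLS is $O(n^2)$, where the hidden constant does not depend on $n$, the weights, or $B$.
   Context: Problem: minimise $f_{\mathrm{obj}}(x)=\sum_{i=1}^n w_ix_i$ over $x\in\{0,1\}^n$ subject to $x_1+\dots+x_n\ge B$. A search point is optimal if it satisfies the constraint and minimises $f_{\mathrm{obj}}$ among all points satisfying the constraint. RLS: maintain a current search point $x_t$; in each iteration choose $b\in\{1,2\}$ uniformly at random, create $x'$ by flipping $b$ distinct bits of $x_t$ chosen uniformly at random; set $x_{t+1}=x'$ if $f(x')\le f(x_t)$, otherwise $x_{t+1}=x_t$. The optimisation time is the number of iterations until an optimal search point has been sampled for the first time. *)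

From mathcomp Require Import all_boot all_order all_algebra.
Set Implicit Arguments. Unset Strict Implicit. Unset Printing Implicit Defensive.
Import Order.TTheory GRing.Theory Num.Theory.
Local Open Scope ring_scope.

Section RLS.
Variables (R : realFieldType) (n : nat).

(* Search points x in {0,1}^n; bit i (0-based) is x_{i+1}. *)
Definition point := {ffun 'I_n -> bool}.

Definition ones (x : point) : nat := #|[set i | x i]|.

(* Weights w : nat -> R, used at indices 1..n (w_i = w i). *)
Definition fobj (w : nat -> R) (x : point) : R :=
  \sum_(i < n) (x i)%:R * w i.+1.

(* penalised fitness f(x) = fobj(x) + max{0, B - b(x)} * (n w_n + 1);
   max{0, B - b(x)} is the truncated natural subtraction. *)
Definition fpen (w : nat -> R) (B : nat) (x : point) : R :=
  fobj w x + (B - ones x)%N%:R * (n%:R * w n + 1).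

Definition feasible (B : nat) (x : point) : bool := (B <= ones x)%N.

Definition optimal (w : nat -> R) (B : nat) (x : point) : bool :=
  feasible B x && [forall y : point, feasible B y ==> (fobj w x <= fobj w y)].

Definition hamming (x y : point) : nat := #|[set i | x i != y i]|.

(* Probability that flipping b distinct uniformly chosen bits of x gives y.
   Convention: if there is no set of b distinct positions ('C(n,b) = 0,
   i.e. n = 1, b = 2) nothing is flipped. *)
Definition mutb (b : nat) (x y : point) : R :=
  if 'C(n, b) == 0%N then (y == x)%:R
  else (hamming x y == b)%:R / 'C(n, b)%:R.

Definition mut (x y : point) : R := (mutb 1 x y + mutb 2 x y) / 2.

Definition rls_step (f : point -> R) (x y : point) : R :=
  \sum_(z : point) mut x z *
     (if f z <= f x then (y == z)%:R else (y == x)%:R).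

(* surv w B x0 t y = Pr[x_t = y and none of x_0..x_t is optimal],
   for RLS on fpen w B started in x0. *)
Fixpoint surv (w : nat -> R) (B : nat) (x0 : point) (t : nat) (y : point) : R :=
  match t with
  | 0 => ((y == x0) && ~~ optimal w B y)%:R
  | t'.+1 => (~~ optimal w B y)%:R *
             \sum_(x : point) surv w B x0 t' x * rls_step (fpen w B) x y
  end.

(* Pr[T > t], T the optimisation time *)
Definition not_hit (w : nat -> R) (B : nat) (x0 : point) (t : nat) : R :=
  \sum_(y : point) surv w B x0 t y.

End RLS.

(* Fitness levels with a drift argument.  Write |x| for the number of ones,
   a(x) for the number of ones at positions of weight > w_B and b(x) for the
   number of zeros at positions of weight < w_B.  The potential
     3n + (B - |x|)  if |x| < B,          2n + (|x| - B)  if |x| > B,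
     n + a(x)        if |x| = B, a(x) > 0,   b(x)         otherwise
   never increases under an accepted move and vanishes only at optimal points.
   Above 2n a single bit flip (probability >= 1/(2n)) lowers it; at level n + a
   (resp. b) each of at least a^2 (resp. b^2) swaps of a one and a zero lowers it
   without increasing the fitness, each with probability >= 1/n^2.  The sum g of
   the inverse progress probabilities of all levels up to the current one thus
   drops by at least 1 in expectation per step, whence
   E[T] <= g(x_0) <= (2n)(2n) + 2 sum_k n^2/k^2 <= 8n^2. *)

From mathcomp Require Import all_boot all_order all_algebra.
From mathcomp Require Import zify ring lra.
Set Implicit Arguments. Unset Strict Implicit. Unset Printing Implicit Defensive.
Import Order.TTheory GRing.Theory Num.Theory.
Local Open Scope ring_scope.

Section BitFlips.
Variables (R : realFieldType) (n : nat).
Local Notation point := (point n).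
Implicit Types (x z : point) (S : {set 'I_n}).

Definition flip S x : point := [ffun k => (k \in S) (+) x k].

Definition diff_set x z : {set 'I_n} := [set i | x i != z i].

Lemma flip_diff_set x z : flip (diff_set x z) x = z.
Proof. by apply/ffunP=> k; rewrite ffunE inE; case: (x k); case: (z k). Qed.

Lemma diff_set_flip S x : diff_set x (flip S x) = S.
Proof. by apply/setP=> k; rewrite inE ffunE; case: (k \in S); case: (x k). Qed.

Lemma hamming_flip S x : hamming x (flip S x) = #|S|.
Proof. exact: (congr1 (fun S => #|S|) (diff_set_flip S x)). Qed.

Lemma card_le_n S : (#|S| <= n)%N.
Proof. by rewrite -[n in (_ <= n)%N]card_ord max_card. Qed.

Lemma card_ord_lt m : (m <= n)%N -> #|[set k : 'I_n | (k < m)%N]| = m.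
Proof.
move=> le_mn; have inj : injective (widen_ord le_mn).
  by move=> a b /(congr1 val) /= /val_inj.
rewrite -[RHS]card_ord -(card_imset _ inj); apply: eq_card => k; rewrite inE.
apply/idP/imsetP => [lt_km | [j _ ->]]; last exact: (ltn_ord j).
by exists (Ordinal lt_km) => //; apply: val_inj.
Qed.

Definition bitsum (F : bool -> 'I_n -> R) x : R := \sum_k F (x k) k.

Lemma bitsum_flip F S x :
  bitsum F (flip S x) = bitsum F x + \sum_(k in S) (F (~~ x k) k - F (x k) k).
Proof.
rewrite /bitsum (bigID (mem S)) [\sum_k F (x k) k](bigID (mem S)) /= sumrB.
rewrite (eq_bigr (fun k => F (~~ x k) k)) => [|k kS]; last by rewrite ffunE kS.
rewrite [\sum_(k | k \notin S) _](eq_bigr (fun k => F (x k) k)) => [|k kS].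
  by ring.
by rewrite ffunE (negbTE kS).
Qed.

Lemma bitsum_flip1 F i x :
  bitsum F (flip [set i] x) = bitsum F x + (F (~~ x i) i - F (x i) i).
Proof. by rewrite bitsum_flip big_set1. Qed.

Lemma bitsum_flip2 F i j x : i != j ->
  bitsum F (flip [set i; j] x) =
  bitsum F x + (F (~~ x i) i - F (x i) i) + (F (~~ x j) j - F (x j) j).
Proof. by move=> ij; rewrite bitsum_flip big_setU1 ?inE // big_set1 addrA. Qed.

Lemma ler_b2R (b1 b2 : bool) : (b1 -> b2) -> b1%:R <= b2%:R :> R.
Proof. by case: b1; case: b2 => // /(_ isT). Qed.

Lemma card_bitsum (P : bool -> 'I_n -> bool) x :
  #|[set k | P (x k) k]|%:R = bitsum (fun v k => (P v k)%:R) x.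
Proof.
rewrite -sum1_card natr_sum big_mkcond; apply: eq_bigr => k _.
by rewrite inE; case: (P _ _).
Qed.

End BitFlips.

Section Mutation.
Variables (R : realFieldType) (n : nat).
Local Notation point := (point n).
Local Notation mutb := (@mutb R n).
Local Notation mut := (@mut R n).
Implicit Types x z : point.

Lemma mutb_ge0 b x z : 0 <= mutb b x z.
Proof. by rewrite /mutb; case: ifP => _ //; rewrite divr_ge0. Qed.

Lemma mut_ge0 x z : 0 <= mut x z.
Proof. by rewrite /mut divr_ge0 // addr_ge0 // mutb_ge0. Qed.

Lemma sum_hamming_eq x b : \sum_z ((hamming x z == b)%:R : R) = 'C(n, b)%:R.
Proof.
rewrite (reindex (fun S => flip S x)); last first.
  by exists (diff_set x) => z _; rewrite ?diff_set_flip ?flip_diff_set.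
under eq_bigr do rewrite hamming_flip.
have := card_draws 'I_n b; rewrite card_ord => <-.
rewrite -natr_sum -sum1_card; congr _%:R.
by rewrite [RHS]big_mkcond; apply: eq_bigr => S _; rewrite inE; case: (_ == _).
Qed.

Lemma sum_mutb b x : \sum_z mutb b x z = 1.
Proof.
rewrite /mutb; case: eqP => [_ | /eqP C0].
  by rewrite (bigD1 x) //= eqxx big1 ?addr0 // => z /negbTE ->.
by rewrite -mulr_suml sum_hamming_eq divff // pnatr_eq0.
Qed.

Lemma sum_mut x : \sum_z mut x z = 1.
Proof.
by rewrite /mut -mulr_suml big_split /= !sum_mutb divff // (_ : 1 + 1 = 2%:R) // pnatr_eq0.
Qed.

Lemma mut_support x z : mut x z != 0 ->
  [\/ z = x, exists i, z = flip [set i] x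
    | exists i j, i != j /\ z = flip [set i; j] x].
Proof.
have [-> _|zx] := eqVneq z x; first exact: Or31.
rewrite -(flip_diff_set x z) in zx *; move: (diff_set x z) => S in zx *.
have [/eqP/cards1P[i ->] _|S1] := eqVneq #|S| 1%N; first by apply: Or32; exists i.
have [/eqP/cards2P[i [j [ij ->]]] _|S2] := eqVneq #|S| 2%N.
  by apply: Or33; exists i, j.
by rewrite /mut /mutb hamming_flip (negbTE zx) (negbTE S1) (negbTE S2);
  case: ifP; case: ifP; rewrite /= ?mul0r ?addr0 ?mul0r ?eqxx.
Qed.

Lemma mut_le_sum (E : pred point) x z : E z -> mut x z <= \sum_(y | E y) mut x y.
Proof. by move=> Ez; rewrite (bigD1 z) //= lerDl sumr_ge0 // => y _; exact: mut_ge0. Qed.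

Lemma mut_flip1_ge (E : pred point) i x :
  E (flip [set i] x) -> 1 <= (2 * n)%:R * \sum_(z | E z) mut x z.
Proof.
move=> /(mut_le_sum x) Ez; apply: le_trans (ler_wpM2l (ler0n _ _) Ez).
have n_gt0 : (0 < n)%N := leq_ltn_trans (leq0n i) (ltn_ord i).
have nR : n%:R != 0 :> R by rewrite pnatr_eq0 -lt0n.
rewrite /mut natrM.
have -> : mutb 1 x (flip [set i] x) = n%:R^-1.
  by rewrite /mutb bin1 hamming_flip cards1 eqxx mul1r (negbTE (lt0n_neq0 n_gt0)).
have -> : 2%:R * n%:R * ((n%:R^-1 + mutb 2 x (flip [set i] x)) / 2) =
          1 + n%:R * mutb 2 x (flip [set i] x) :> R by field.
by rewrite lerDl mulr_ge0 ?mutb_ge0.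
Qed.

Lemma mut_ham2_ge x z : hamming x z = 2%N -> 1 <= (n ^ 2)%N%:R * mut x z.
Proof.
move=> xz2; have n_ge2 : (2 <= n)%N by rewrite -xz2 card_le_n.
have C_gt0 : (0 < 'C(n, 2))%N by rewrite bin_gt0.
have mutb2 : mutb 2 x z = 'C(n, 2)%:R^-1.
  by rewrite /mutb xz2 eqxx (negbTE (lt0n_neq0 C_gt0)) mul1r.
have C2_le : 'C(n, 2)%:R * 2 <= (n ^ 2)%N%:R :> R.
  rewrite -natrM ler_nat bin2 muln2 halfK (leq_trans (leq_subr _ _)) //.
  by rewrite -mulnn leq_mul2l leq_pred orbT.
have CR : 0 < 'C(n, 2)%:R :> R by rewrite ltr0n.
apply: le_trans (_ : (n ^ 2)%N%:R * ('C(n, 2)%:R^-1 / 2) <= _).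
  by rewrite mulrA ler_pdivlMr // mul1r ler_pdivlMr // mulrC.
by rewrite /mut mutb2 ler_wpM2l ?ler0n // ler_pM2r ?invr_gt0 // lerDr mutb_ge0.
Qed.

Lemma flip_swap_inj (A C : {set 'I_n}) x :
  {in A, forall i, x i} -> {in C, forall j, ~~ x j} ->
  {in setX A C &, injective (fun p : 'I_n * 'I_n => flip [set p.1; p.2] x)}.
Proof.
move=> xA xC [i1 j1] [i2 j2]; rewrite !inE /= => /andP[i1A j1C] /andP[i2A j2C].
move=> /(congr1 (diff_set x)); rewrite !diff_set_flip => /setP e12.
have := e12 i1; rewrite !inE eqxx /= => /esym /orP[/eqP<- | /eqP i1j2]; last first.
  by have := xC _ j2C; rewrite -i1j2 xA.
have := e12 j1; rewrite !inE eqxx orbT /= => /esym /orP[/eqP j1i1 | /eqP<- //].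
by have := xC _ j1C; rewrite j1i1 xA.
Qed.

Lemma mut_swaps_ge (E : pred point) (A C : {set 'I_n}) x :
  {in A, forall i, x i} -> {in C, forall j, ~~ x j} ->
  (forall i j, i \in A -> j \in C -> E (flip [set i; j] x)) ->
  (#|A| * #|C|)%:R <= (n ^ 2)%N%:R * \sum_(z | E z) mut x z.
Proof.
move=> xA xC EAC; set swap := fun p : 'I_n * 'I_n => flip [set p.1; p.2] x.
have swap2 p : p \in setX A C -> hamming x (swap p) = 2%N.
  case: p => i j; rewrite inE /= => /andP[/xA xi /xC xj].
  by rewrite hamming_flip cards2 /=; case: eqP xj => // <-; rewrite xi.
rewrite -cardsX -(card_in_imset (flip_swap_inj xA xC)) -sum1_card natr_sum.
apply: le_trans (_ : \sum_(z in swap @: setX A C) (n ^ 2)%N%:R * mut x z <= _).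
  by apply: ler_sum => _ /imsetP[p pAC ->]; exact: mut_ham2_ge (swap2 p pAC).
rewrite -mulr_sumr; apply: ler_wpM2l => //.
rewrite [X in _ <= X]big_mkcond [X in X <= _]big_mkcond; apply: ler_sum => z _.
case: ifP => [/imsetP[[i j] /setXP[iA jC] ->] | _]; first by rewrite EAC.
by case: ifP; rewrite ?mut_ge0.
Qed.

Lemma mut_swaps_progress (E : pred point) (A C : {set 'I_n}) x k :
  (0 < k)%N -> (k <= #|A|)%N -> (k <= #|C|)%N ->
  {in A, forall i, x i} -> {in C, forall j, ~~ x j} ->
  (forall i j, i \in A -> j \in C -> E (flip [set i; j] x)) ->
  1 <= (n ^ 2)%N%:R / (k ^ 2)%N%:R * \sum_(z | E z) mut x z.
Proof.
move=> k_gt0 kA kC xA xC EAC; have := mut_swaps_ge xA xC EAC.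
have k2_gt0 : 0 < (k ^ 2)%N%:R :> R by rewrite ltr0n expn_gt0 k_gt0.
have : (k ^ 2)%N%:R <= (#|A| * #|C|)%N%:R :> R by rewrite ler_nat -mulnn leq_mul.
rewrite mulrAC ler_pdivlMr // mul1r; exact: le_trans.
Qed.

End Mutation.

Lemma mean_le_sub1 (R : realFieldType) (T : finType) (m h : T -> R) (E : pred T)
    (g c : R) :
  (forall z, 0 <= m z) -> \sum_z m z = 1 ->
  (forall z, m z != 0 -> h z <= g - (E z)%:R * c) ->
  1 <= c * \sum_(z | E z) m z -> \sum_z m z * h z <= g - 1.
Proof.
move=> m_ge0 m_sum1 h_le cP.
have mE : \sum_z m z * (E z)%:R = \sum_(z | E z) m z.
  by rewrite [RHS]big_mkcond; apply: eq_bigr => z _; case: (E z); rewrite ?mulr1 ?mulr0.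
apply: le_trans (_ : _ <= \sum_z (m z * g - c * (m z * (E z)%:R))) _.
  apply: ler_sum => z _; have [->|mz] := eqVneq (m z) 0.
    by rewrite !mul0r mulr0 subr0.
  rewrite mulrCA [c * _]mulrC -mulrBr.
  by apply: ler_wpM2l; [apply: m_ge0 | apply: h_le].
by rewrite sumrB -mulr_suml -mulr_sumr m_sum1 mE mul1r lerD2l lerN2.
Qed.

Section Drift.
Variables (R : realFieldType) (n : nat) (w : nat -> R) (B : nat).
Local Notation point := (point n).
Local Notation mut := (@mut R n).
Local Notation f := (fpen w B).
Local Notation opt := (optimal w B).
Implicit Types x y z : point.

(* Optimal offspring contribute 0: the optimisation time stops there. *)
Definition expected_next (g : point -> R) x : R :=
  \sum_z mut x z * (if f z <= f x then (~~ opt z)%:R * g z else g x).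

Definition mean_surv (g : point -> R) x0 t : R := \sum_y surv w B x0 t y * g y.

Lemma rls_step_ge0 (F : point -> R) x y : 0 <= rls_step F x y.
Proof. by apply: sumr_ge0 => z _; rewrite mulr_ge0 ?mut_ge0 //; case: ifP. Qed.

Lemma surv_ge0 x0 t y : 0 <= surv w B x0 t y.
Proof.
elim: t y => [|t IH] y //=.
by rewrite mulr_ge0 // sumr_ge0 // => x _; rewrite mulr_ge0 ?rls_step_ge0.
Qed.

Lemma surv_optimal x0 t y : opt y -> surv w B x0 t y = 0.
Proof. by case: t => [|t] /= ->; rewrite ?andbF ?mul0r. Qed.

Lemma sum_rls_step (K : point -> R) x :
  \sum_y K y * rls_step f x y = \sum_z mut x z * (if f z <= f x then K z else K x).
Proof.
rewrite /rls_step; under eq_bigr do rewrite mulr_sumr; rewrite exchange_big.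
apply: eq_bigr => z _; under eq_bigr do rewrite mulrCA; rewrite -mulr_sumr.
have sum_eq (y0 : point) : \sum_y K y * (y == y0)%:R = K y0.
  by rewrite (bigD1 y0) //= eqxx mulr1 big1 ?addr0 // => y /negbTE ->; rewrite mulr0.
by case: ifP; rewrite sum_eq.
Qed.

Lemma mean_surv_step (g : point -> R) x0 t :
  (forall x, ~~ opt x -> expected_next g x <= g x - 1) ->
  mean_surv g x0 t.+1 <= mean_surv g x0 t - not_hit w B x0 t.
Proof.
move=> drift; rewrite /mean_surv /not_hit -sumrB /=.
under eq_bigr do rewrite mulr_sumr mulr_suml.
rewrite exchange_big; apply: ler_sum => x _.
set s := surv w B x0 t x.
have [ox|nox] := boolP (opt x).
  rewrite /s surv_optimal // mul0r subr0 big1 // => y _.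
  by rewrite mul0r mulr0 mul0r.
have -> : \sum_y (~~ opt y)%:R * (s * rls_step f x y) * g y =
          s * \sum_y ((~~ opt y)%:R * g y) * rls_step f x y.
  by rewrite mulr_sumr; apply: eq_bigr => y _; ring.
rewrite -{3}[s]mulr1 -mulrBr; apply: ler_wpM2l; first exact: surv_ge0.
by rewrite sum_rls_step /= nox mul1r; apply: drift.
Qed.

Lemma sum_not_hit_le (g : point -> R) x0 N :
  (forall x, 0 <= g x) -> (forall x, ~~ opt x -> expected_next g x <= g x - 1) ->
  \sum_(t < N) not_hit w B x0 t <= g x0.
Proof.
move=> g_ge0 drift.
have telescope M : \sum_(t < M) not_hit w B x0 t <= mean_surv g x0 0 - mean_surv g x0 M.
  elim: M => [|M IH]; first by rewrite big_ord0 subrr.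
  by rewrite big_ord_recr /=; have := mean_surv_step x0 M drift; lra.
apply: le_trans (telescope N) _.
have mean_surv_ge0 : 0 <= mean_surv g x0 N.
  by rewrite sumr_ge0 // => y _; rewrite mulr_ge0 ?surv_ge0.
suff : mean_surv g x0 0 <= g x0 by lra.
rewrite /mean_surv (bigD1 x0) //= big1 => [|y /negbTE ->]; last by rewrite mul0r.
by rewrite eqxx addr0; case: (opt x0); rewrite /= ?mul0r ?mul1r.
Qed.

End Drift.

Lemma sum_inv_sq_le2 (R : realFieldType) k :
  \sum_(1 <= m < k.+1) ((m ^ 2)%:R)^-1 <= 2 :> R.
Proof.
case: k => [|k]; first by rewrite big_geq.
suff : \sum_(1 <= m < k.+2) ((m ^ 2)%:R)^-1 <= 2 - k.+1%:R^-1 :> R.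
  by move/le_trans; apply; rewrite gerBl invr_ge0.
elim: k => [|k IH]; first by rewrite big_nat1 exp1n invr1; lra.
rewrite big_nat_recr //= natrX.
have -> : k.+2%:R = k.+1%:R + 1 :> R by rewrite natr1.
have : 0 < k.+1%:R :> R by rewrite ltr0n.
move: IH; move: (k.+1%:R) => a IH a_gt0.
have : 0 <= a^-1 - (a + 1)^-1 - (a + 1) ^- 2.
  have -> : a^-1 - (a + 1)^-1 - (a + 1) ^- 2 = (a * (a + 1) ^+ 2)^-1.
    by field; rewrite !lt0r_neq0 // ltr_wpDr.
  by rewrite invr_ge0 mulr_ge0 ?exprn_ge0 ?ltW ?ltr_wpDr.
lra.
Qed.

Section LevelCosts.
Variables (R : realFieldType) (n : nat).

(* The inverse of the lower bound on the probability of leaving level k of the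
   potential: 1/(2n) by one-bit flips above 2n, and j^2/n^2 by swaps when the
   count of heavy ones (resp. light zeros) is j. *)
Definition level_cost (k : nat) : R :=
  if (k <= n)%N then (n ^ 2)%N%:R / (k ^ 2)%N%:R
  else if (k <= 2 * n)%N then (n ^ 2)%N%:R / ((k - n) ^ 2)%N%:R
  else (2 * n)%N%:R.

Definition cost_upto (k : nat) : R := \sum_(1 <= m < k.+1) level_cost m.

Lemma level_cost_low k : (k <= n)%N -> level_cost k = (n ^ 2)%N%:R / (k ^ 2)%N%:R.
Proof. by rewrite /level_cost => ->. Qed.

Lemma level_cost_mid k : (n < k <= 2 * n)%N ->
  level_cost k = (n ^ 2)%N%:R / ((k - n) ^ 2)%N%:R.
Proof. by case/andP=> lt_nk le_k; rewrite /level_cost leqNgt lt_nk le_k. Qed.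

Lemma level_cost_high k : (2 * n < k)%N -> level_cost k = (2 * n)%N%:R.
Proof. by move=> lt_k; rewrite /level_cost !ifF //; lia. Qed.

Lemma level_cost_ge0 k : 0 <= level_cost k.
Proof. by rewrite /level_cost; case: ifP => _; [|case: ifP => _]; rewrite ?divr_ge0. Qed.

Lemma cost_uptoS k : cost_upto k.+1 = cost_upto k + level_cost k.+1.
Proof. by rewrite /cost_upto big_nat_recr. Qed.

Lemma cost_upto_ge0 k : 0 <= cost_upto k.
Proof. by rewrite sumr_ge0 // => m _; apply: level_cost_ge0. Qed.

Lemma le_cost_upto j k : (j <= k)%N -> cost_upto j <= cost_upto k.
Proof.
move=> jk; rewrite /cost_upto (@big_cat_nat _ _ _ j.+1 1 k.+1) //=.
by rewrite lerDl sumr_ge0 // => m _; apply: level_cost_ge0.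
Qed.

Lemma cost_upto_4n_le : cost_upto (4 * n) <= (8 * n ^ 2)%N%:R.
Proof.
have le_1 : (1 <= n.+1)%N by [].
have le_n : (n.+1 <= (2 * n).+1)%N by lia.
have le_2n : ((2 * n).+1 <= (4 * n).+1)%N by lia.
rewrite /cost_upto (big_cat_nat le_1 (leq_trans le_n le_2n)) (big_cat_nat le_n le_2n) /=.
have inv_sq : \sum_(1 <= m < n.+1) (n ^ 2)%N%:R / (m ^ 2)%N%:R <= (n ^ 2)%N%:R * 2 :> R.
  by rewrite -mulr_sumr; apply: ler_wpM2l; rewrite ?sum_inv_sq_le2.
have S1 : \sum_(1 <= m < n.+1) level_cost m =
          \sum_(1 <= m < n.+1) (n ^ 2)%N%:R / (m ^ 2)%N%:R.
  by apply: eq_big_nat => m /andP[_ le_mn]; rewrite /level_cost -ltnS le_mn.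
have S2 : \sum_(n.+1 <= m < (2 * n).+1) level_cost m =
          \sum_(1 <= m < n.+1) (n ^ 2)%N%:R / (m ^ 2)%N%:R.
  rewrite -[n.+1 in LHS]add1n big_addn (_ : ((2 * n).+1 - n = n.+1)%N); last by lia.
  apply: eq_big_nat => m /andP[m_gt0 le_mn]; rewrite /level_cost.
  by rewrite ifF ?ifT ?addnK //; lia.
have S3 : \sum_((2 * n).+1 <= m < (4 * n).+1) level_cost m = (2 * n)%N%:R *+ (2 * n).
  rewrite (eq_big_nat _ _ (F2 := fun=> (2 * n)%N%:R)) ?sumr_const_nat.
    by congr (_ *+ _); lia.
  by move=> m /andP[lt_m _]; rewrite /level_cost !ifF //; lia.
rewrite S1 S2 S3.
have -> : (2 * n)%N%:R *+ (2 * n) = (2 * n * (2 * n))%N%:R :> R.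
  by rewrite [RHS]natrM mulr_natr.
have -> : (8 * n ^ 2)%N%:R =
          (n ^ 2)%N%:R * 2 + (n ^ 2)%N%:R * 2 + (2 * n * (2 * n))%N%:R :> R.
  by rewrite -!natrM -!natrD; congr _%:R; nia.
lra.
Qed.

End LevelCosts.

Section Problem.
Variables (R : realFieldType) (n : nat) (w : nat -> R) (B : nat).
Hypotheses (w1_gt0 : 0 < w 1%N)
  (w_mono : forall i j : nat, (1 <= i)%N -> (i <= j)%N -> (j <= n)%N -> w i <= w j)
  (B_gt0 : (0 < B)%N) (B_le_n : (B <= n)%N).
Local Notation point := (point n).
Local Notation mut := (@mut R n).
Local Notation f := (fpen w B).
Local Notation opt := (optimal w B).
Implicit Types x z : point.

Definition wt (i : 'I_n) : R := w i.+1.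

Definition penalty : R := n%:R * w n + 1.

Lemma wt_gt0 i : 0 < wt i.
Proof. by apply: lt_le_trans w1_gt0 _; apply: w_mono. Qed.

Lemma wt_le_wn i : wt i <= w n.
Proof. exact: w_mono. Qed.

Lemma wB_gt0 : 0 < w B.
Proof. by apply: lt_le_trans w1_gt0 _; apply: w_mono. Qed.

Lemma wn_gt0 : 0 < w n.
Proof. by apply: lt_le_trans w1_gt0 _; apply: w_mono => //; apply: leq_trans B_le_n. Qed.

Lemma wt_lt_penalty i : wt i < penalty.
Proof.
have : w n <= n%:R * w n by rewrite ler_peMl ?ler1n ?(ltW wn_gt0) // (leq_trans B_gt0).
by rewrite /penalty; have := wt_le_wn i; lra.
Qed.

Lemma fobjE x : fobj w x = bitsum (fun v k => v%:R * wt k) x.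
Proof. by []. Qed.

Lemma onesE x : (ones x)%:R = bitsum (fun v _ => v%:R) x :> R.
Proof. exact: (@card_bitsum R n (fun v _ => v)). Qed.

Lemma fobj_ge0 x : 0 <= fobj w x.
Proof. by apply: sumr_ge0 => i _; rewrite mulr_ge0 // ltW // wt_gt0. Qed.

Lemma fobj_le x : fobj w x <= n%:R * w n.
Proof.
rewrite mulr_natl -[n in _ *+ n]card_ord -sumr_const; apply: ler_sum => i _.
apply: le_trans (wt_le_wn i); case: (x i); rewrite ?mul1r ?mul0r //; exact: ltW (wt_gt0 i).
Qed.

Lemma fobj_lt_penalty x : fobj w x < penalty.
Proof. by rewrite /penalty (le_lt_trans (fobj_le x)) // ltrDl. Qed.

Lemma fpen_feasible x : (B <= ones x)%N -> f x = fobj w x.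
Proof. by rewrite /fpen -subn_eq0 => /eqP->; rewrite mul0r addr0. Qed.

Lemma fpen_lt_of_deficit x z : ((B - ones x).+1 <= B - ones z)%N -> f x < f z.
Proof.
move=> deficit; rewrite /fpen -/penalty.
have : (B - ones x)%N%:R + 1 <= (B - ones z)%N%:R :> R by rewrite natr1 ler_nat.
have pen_gt0 : 0 < penalty by have := fobj_lt_penalty x; have := fobj_ge0 x; lra.
rewrite -lerBrDl => /(ler_wpM2r (ltW pen_gt0)); rewrite mul1r mulrBl => gap.
by have := fobj_ge0 z; have := fobj_lt_penalty x; lra.
Qed.

Lemma fobj_lt_of_ones_lt x z :
  mut x z != 0 -> (ones x < ones z)%N -> fobj w x < fobj w z.
Proof.
move=> /mut_support[->|[i ->]|[i [j [ij ->]]]]; first by rewrite ltnn.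
  rewrite -(ltr_nat R) !onesE !fobjE !bitsum_flip1.
  by have := wt_gt0 i; case: (x i) => /=; lra.
rewrite -(ltr_nat R) !onesE !fobjE !bitsum_flip2 //.
by have := wt_gt0 i; have := wt_gt0 j; case: (x i); case: (x j) => /=; lra.
Qed.

Definition heavy_ones x := [set i | x i && (w B < wt i)].

Definition light_zeros x := [set i | ~~ x i && (wt i < w B)].

Lemma card_heavy_ones x :
  #|heavy_ones x|%:R = bitsum (fun v k => (v && (w B < wt k))%:R) x :> R.
Proof. exact: card_bitsum. Qed.

Lemma card_light_zeros x :
  #|light_zeros x|%:R = bitsum (fun v k => (~~ v && (wt k < w B))%:R) x :> R.
Proof. exact: card_bitsum. Qed.

Lemma heavy_light_nonincr x z :
  mut x z != 0 -> ones z = ones x -> fobj w z <= fobj w x ->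
  (#|heavy_ones z| <= #|heavy_ones x|)%N /\ (#|light_zeros z| <= #|light_zeros x|)%N.
Proof.
move=> /mut_support[->|[i ->]|[i [j [ij ->]]]] //.
  move/(congr1 (fun m => m%:R : R)); rewrite !onesE bitsum_flip1.
  by case: (x i) => /=; lra.
move/(congr1 (fun m => m%:R : R)); rewrite !onesE !fobjE !bitsum_flip2 //.
rewrite -!(ler_nat R) !card_heavy_ones !card_light_zeros !bitsum_flip2 //=.
have wt_order (a b : R) : a <= b ->
    (w B < a)%R%:R <= (w B < b)%R%:R :> R /\ (b < w B)%R%:R <= (a < w B)%R%:R :> R.
  move=> ab; split; apply: ler_b2R => h.
    exact: lt_le_trans h ab.
  exact: le_lt_trans ab h.
case: (x i); case: (x j) => /=; rewrite ?mul1r ?mul0r; try lra.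
  by move=> _ wji; have [] := wt_order (wt j) (wt i) ltac:(lra); lra.
by move=> _ wij; have [] := wt_order (wt i) (wt j) ltac:(lra); lra.
Qed.

Definition potential x : nat :=
  (if ones x < B then 3 * n + (B - ones x)
   else if B < ones x then 2 * n + (ones x - B)
   else if 0 < #|heavy_ones x| then n + #|heavy_ones x|
   else #|light_zeros x|)%N.

Lemma ones_le x : (ones x <= n)%N.
Proof. exact: card_le_n. Qed.

Lemma potential_deficit x : (ones x < B)%N -> potential x = (3 * n + (B - ones x))%N.
Proof. by rewrite /potential => ->. Qed.

Lemma potential_excess x : (B < ones x)%N -> potential x = (2 * n + (ones x - B))%N.
Proof. by move=> gt_B; rewrite /potential gt_B ltnNge ltnW. Qed.

Lemma potential_balanced x : ones x = B ->
  potential x = (if 0 < #|heavy_ones x| then n + #|heavy_ones x| else #|light_zeros x|)%N.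
Proof. by rewrite /potential => ->; rewrite ltnn. Qed.

Lemma potential_feasible x : (B <= ones x)%N -> (potential x <= 2 * n + (ones x - B))%N.
Proof.
rewrite leq_eqVlt => /orP[/eqP/esym ones_B | /potential_excess-> //].
have : (#|heavy_ones x| <= n)%N := card_le_n _.
have : (#|light_zeros x| <= n)%N := card_le_n _.
by rewrite potential_balanced //; case: ifP => _; lia.
Qed.

Lemma potential_le x : (potential x <= 4 * n)%N.
Proof.
have := ones_le x; have [/potential_deficit-> | ge_B] := ltnP (ones x) B; first lia.
by have := potential_feasible ge_B; lia.
Qed.

Lemma potential_nonincr x z :
  mut x z != 0 -> f z <= f x -> (potential z <= potential x)%N.
Proof.
move=> xz fzx; have deficit : (B - ones z <= B - ones x)%N.
  by rewrite leqNgt; apply/negP => /fpen_lt_of_deficit; rewrite ltNge fzx.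
have := ones_le z; have [lt_B|ge_B] := ltnP (ones x) B.
  rewrite (potential_deficit lt_B); have [/potential_deficit-> | ge_Bz] := ltnP (ones z) B.
    lia.
  by have := potential_feasible ge_Bz; lia.
have ge_Bz : (B <= ones z)%N by lia.
rewrite !fpen_feasible // in fzx.
have le_ones : (ones z <= ones x)%N.
  by rewrite leqNgt; apply/negP => /(fobj_lt_of_ones_lt xz); rewrite ltNge fzx.
have [gt_B|le_B] := ltnP B (ones x).
  by have := potential_feasible ge_Bz; rewrite (potential_excess gt_B); lia.
have [ones_zx ones_xB] : ones z = ones x /\ ones x = B by lia.
have [heavy light] := heavy_light_nonincr xz ones_zx fzx.
have : (#|light_zeros z| <= n)%N := card_le_n _.
rewrite !potential_balanced ?ones_zx //.
by case: ifP; case: ifP => //; lia.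
Qed.

Lemma optimal_of_potential_eq0 x : potential x = 0%N -> opt x.
Proof.
have [/potential_deficit-> | ge_B] := ltnP (ones x) B; first lia.
have [/potential_excess-> | le_B] := ltnP B (ones x); first lia.
have ones_B : ones x = B by lia.
rewrite potential_balanced //; case: ifP => [_|/negbT]; first lia.
rewrite -eqn0Ngt => /eqP/cards0_eq heavy0 /cards0_eq light0.
have no_heavy k : x k -> wt k <= w B.
  move=> xk; rewrite leNgt; apply/negP => lt.
  by have := in_set0 k; rewrite -heavy0 inE xk lt.
have no_light k : ~~ x k -> w B <= wt k.
  move=> xk; rewrite leNgt; apply/negP => lt.
  by have := in_set0 k; rewrite -light0 inE xk lt.
rewrite /optimal /feasible ones_B leqnn; apply/forallP => y; apply/implyP => ge_By.
have split_fobj : fobj w y - fobj w x =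
    \sum_k ((y k)%:R - (x k)%:R) * (wt k - w B) + w B * ((ones y)%:R - (ones x)%:R).
  rewrite !onesE !fobjE /bitsum -!sumrB mulr_sumr -big_split /=.
  by apply: eq_bigr => k _; ring.
rewrite -subr_ge0 split_fobj addr_ge0 //.
  apply: sumr_ge0 => k _; have := no_heavy k; have := no_light k.
  by case: (x k); case: (y k) => /= h1 h2; rewrite ?subrr ?mul0r //; nra.
by rewrite mulr_ge0 ?subr_ge0 ?ler_nat ?ones_B // ltW // wB_gt0.
Qed.

Lemma card_wt_le_wB : (B <= #|[set k | ~~ (w B < wt k)%R]|)%N.
Proof.
rewrite -{1}(card_ord_lt B_le_n); apply/subset_leq_card/subsetP => k.
by rewrite !inE -leNgt => lt_kB; apply: w_mono.
Qed.

Lemma card_wt_lt_wB : (#|[set k | (wt k < w B)%R]| < B)%N.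
Proof.
have le_B1 : (B.-1 <= n)%N by rewrite (leq_trans (leq_pred B)).
rewrite -[X in (_ < X)%N](prednK B_gt0) ltnS -(card_ord_lt le_B1).
apply/subset_leq_card/subsetP => k; rewrite !inE; apply: contraTT.
by rewrite -leqNgt -leNgt => le_Bk; apply: w_mono => //; lia.
Qed.

(* Stated additively to avoid truncated subtraction. *)
Lemma ones_flip1 i x : (ones (flip [set i] x) + x i = ones x + ~~ x i)%N.
Proof.
apply/eqP; rewrite -(eqr_nat R) !natrD !onesE bitsum_flip1.
by case: (x i) => /=; apply/eqP; ring.
Qed.

Lemma fobj_flip1 i x :
  fobj w (flip [set i] x) + (x i)%:R * wt i = fobj w x + (~~ x i)%:R * wt i.
Proof. by rewrite !fobjE bitsum_flip1; ring. Qed.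

Lemma ones_swap i j x : x i -> ~~ x j -> ones (flip [set i; j] x) = ones x.
Proof.
move=> xi xj; have ij : i != j by apply: contraNneq xj => <-.
apply/eqP; rewrite -(eqr_nat R) !onesE bitsum_flip2 // xi (negbTE xj) /=.
by apply/eqP; ring.
Qed.

Lemma fobj_swap i j x : x i -> ~~ x j ->
  fobj w (flip [set i; j] x) = fobj w x - wt i + wt j.
Proof.
move=> xi xj; have ij : i != j by apply: contraNneq xj => <-.
by rewrite !fobjE bitsum_flip2 // xi (negbTE xj) /=; ring.
Qed.

Lemma exists_zero x : (ones x < n)%N -> exists i, ~~ x i.
Proof.
move=> lt_n; have : (0 < #|~: [set i | x i]|)%N.
  by rewrite cardsCs setCK card_ord subn_gt0.
by case/card_gt0P => i; rewrite !inE; exists i.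
Qed.

Lemma exists_one x : (0 < ones x)%N -> exists i, x i.
Proof. by case/card_gt0P => i; rewrite inE; exists i. Qed.

Definition improves x z := (f z <= f x) && (potential z < potential x)%N.

Lemma progress_deficit x : (ones x < B)%N ->
  1 <= level_cost R n (potential x) * \sum_(z | improves x z) mut x z.
Proof.
move=> lt_B; rewrite potential_deficit // level_cost_high; last by lia.
have [i xi] := exists_zero (leq_trans lt_B B_le_n); apply: (@mut_flip1_ge R n _ i).
set z := flip [set i] x; have := ones_flip1 i x; have := fobj_flip1 i x.
rewrite -/z (negbTE xi) /= mul0r addr0 mul1r addn0 addn1 => fobj_z ones_z.
have le_f : f z <= f x.
  rewrite /fpen ones_z fobj_z (_ : (B - ones x = (B - (ones x).+1).+1)%N); last by lia.
  by rewrite -natr1 mulrDl mul1r -/penalty; have := wt_lt_penalty i; lra.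
rewrite /improves le_f (potential_deficit lt_B) /=.
have [/potential_deficit-> | ge_B] := ltnP (ones z) B; first lia.
by have := potential_feasible ge_B; have := ones_le z; lia.
Qed.

Lemma progress_excess x : (B < ones x)%N ->
  1 <= level_cost R n (potential x) * \sum_(z | improves x z) mut x z.
Proof.
move=> gt_B; have := ones_le x => le_n.
rewrite potential_excess // level_cost_high; last by lia.
have [i xi] := exists_one (leq_ltn_trans (leq0n B) gt_B); apply: (@mut_flip1_ge R n _ i).
set z := flip [set i] x; have := ones_flip1 i x; have := fobj_flip1 i x.
rewrite -/z xi /= mul0r addr0 mul1r addn0 addn1 => fobj_z ones_z.
have ge_B : (B <= ones z)%N by lia.
rewrite /improves !fpen_feasible ?(ltnW gt_B) // -fobj_z lerDl ltW ?wt_gt0 //=.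
by have := potential_feasible ge_B; rewrite (potential_excess gt_B); lia.
Qed.

Lemma progress_heavy x : ones x = B -> (0 < #|heavy_ones x|)%N ->
  1 <= level_cost R n (potential x) * \sum_(z | improves x z) mut x z.
Proof.
move=> ones_B heavy_gt0; have le_n : (#|heavy_ones x| <= n)%N := card_le_n _.
rewrite potential_balanced // heavy_gt0 level_cost_mid ?addKn; last lia.
set O := [set k | x k]; set L := [set k | ~~ (w B < wt k)%R].
have heavy_sub : heavy_ones x \subset O by apply/subsetP => k; rewrite !inE => /andP[].
have LO : L :&: O = O :\: heavy_ones x.
  by apply/setP => k; rewrite !inE; case: (x k); rewrite ?andbT ?andbF.
apply: (@mut_swaps_progress R n _ (heavy_ones x) (L :\: O)) => //.
- suff : (#|heavy_ones x| <= #|L :\: O|)%N by [].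
  have : #|L :\: O| = (#|L| - #|L :&: O|)%N := cardsD L O.
  have : #|L :&: O| = (#|O| - #|heavy_ones x|)%N.
    by rewrite LO cardsD (setIidPr heavy_sub).
  have := subset_leq_card heavy_sub; have : #|O| = B := ones_B.
  by have : (B <= #|L|)%N := card_wt_le_wB; lia.
- by move=> i; rewrite inE => /andP[].
- by move=> j; rewrite !inE => /andP[].
move=> i j; rewrite !inE => /andP[xi wi] /andP[xj wj].
have ij : i != j by apply: contraNneq xj => <-.
set z := flip [set i; j] x; have ones_z : ones z = B by rewrite ones_swap.
have heavy_z : (#|heavy_ones z|.+1 = #|heavy_ones x|)%N.
  apply/eqP; rewrite -(eqr_nat R) -natr1 !card_heavy_ones bitsum_flip2 //= xi wi.
  by rewrite (negbTE xj) (negbTE wj) /=; apply/eqP; lra.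
rewrite -leNgt in wj; have lt_ji := le_lt_trans wj wi.
rewrite /improves !fpen_feasible ?ones_z ?ones_B // fobj_swap //; apply/andP; split.
  lra.
have : (#|light_zeros z| <= n)%N := card_le_n _.
rewrite (potential_balanced ones_z) (potential_balanced ones_B) heavy_gt0.
by case: ifP => _; lia.
Qed.

Lemma progress_light x : ones x = B -> #|heavy_ones x| = 0%N ->
  (0 < #|light_zeros x|)%N ->
  1 <= level_cost R n (potential x) * \sum_(z | improves x z) mut x z.
Proof.
move=> ones_B heavy0 light_gt0; have le_n : (#|light_zeros x| <= n)%N := card_le_n _.
have pot_x : potential x = #|light_zeros x| by rewrite potential_balanced // heavy0.
have no_heavy k : x k -> ~~ (w B < wt k).
  move=> xk; apply/negP => wk.
  by have := in_set0 k; rewrite -(cards0_eq heavy0) inE xk wk.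
rewrite pot_x level_cost_low //.
set O := [set k | x k]; set Lt := [set k | (wt k < w B)%R].
apply: (@mut_swaps_progress R n _ (O :\: Lt) (light_zeros x)) => //.
- suff : (#|light_zeros x| <= #|O :\: Lt|)%N by [].
  have -> : light_zeros x = Lt :\: O by apply/setP => k; rewrite !inE andbC.
  have : #|O :\: Lt| = (#|O| - #|O :&: Lt|)%N := cardsD O Lt.
  have : #|Lt :\: O| = (#|Lt| - #|O :&: Lt|)%N by rewrite cardsD setIC.
  have : (#|O :&: Lt| <= #|Lt|)%N := subset_leq_card (subsetIr O Lt).
  by have : #|O| = B := ones_B; have : (#|Lt| < B)%N := card_wt_lt_wB; lia.
- by move=> i; rewrite !inE => /andP[].
- by move=> j; rewrite !inE => /andP[].
move=> i j; rewrite !inE => /andP[wi xi] /andP[xj wj].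
have ij : i != j by apply: contraNneq xj => <-.
have wiB : wt i = w B by apply/eqP; rewrite eq_le leNgt (no_heavy i xi) leNgt wi.
set z := flip [set i; j] x; have ones_z : ones z = B by rewrite ones_swap.
have heavy_z : #|heavy_ones z| = 0%N.
  apply/eqP; rewrite -(eqr_nat R) card_heavy_ones bitsum_flip2 //= -card_heavy_ones.
  rewrite heavy0 xi (negbTE xj) (negbTE (no_heavy i xi)) /= ltNge (ltW wj) /=.
  by apply/eqP; lra.
have light_z : (#|light_zeros z|.+1 = #|light_zeros x|)%N.
  apply/eqP; rewrite -(eqr_nat R) -natr1 !card_light_zeros bitsum_flip2 //=.
  by rewrite xi (negbTE xj) (negbTE wi) wj /=; apply/eqP; lra.
rewrite /improves !fpen_feasible ?ones_z ?ones_B // fobj_swap //; apply/andP; split.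
  lra.
by rewrite (potential_balanced ones_z) heavy_z pot_x -light_z.
Qed.

Lemma progress x : ~~ opt x ->
  1 <= level_cost R n (potential x) * \sum_(z | improves x z) mut x z.
Proof.
move=> not_opt.
have [lt_B|ge_B] := ltnP (ones x) B; first exact: progress_deficit.
have [gt_B|le_B] := ltnP B (ones x); first exact: progress_excess.
have ones_B : ones x = B by apply/eqP; rewrite eqn_leq le_B ge_B.
have [heavy0|heavy_gt0] := posnP #|heavy_ones x|; last exact: progress_heavy.
apply: progress_light => //; rewrite lt0n; apply: contra not_opt => /eqP light0.
by apply: optimal_of_potential_eq0; rewrite potential_balanced // heavy0.
Qed.

Lemma expected_next_cost x : ~~ opt x ->
  expected_next w B (fun z => cost_upto R n (potential z)) x <=
  cost_upto R n (potential x) - 1.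
Proof.
move=> not_opt; have pot_gt0 : (0 < potential x)%N.
  by rewrite lt0n; apply: contra not_opt => /eqP; exact: optimal_of_potential_eq0.
have costS : cost_upto R n (potential x) =
             cost_upto R n (potential x).-1 + level_cost R n (potential x).
  by rewrite -[in LHS](prednK pot_gt0) cost_uptoS prednK.
apply: (mean_le_sub1 (@mut_ge0 R n x) (@sum_mut R n x) _ (progress not_opt)) => z xz.
rewrite /improves; case: ifP => fzx /=; last by rewrite mul0r subr0.
have cost_le k : (~~ opt z)%:R * cost_upto R n k <= cost_upto R n k.
  by case: (opt z); rewrite /= ?mul0r ?mul1r // cost_upto_ge0.
have := potential_nonincr xz fzx; rewrite leq_eqVlt => /orP[/eqP-> | lt_zx].
  by rewrite ltnn /= mul0r subr0.
rewrite lt_zx mul1r costS addrK; apply: le_trans (cost_le _) _.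
by apply: le_cost_upto; rewrite -ltnS prednK.
Qed.

End Problem.

(* E[T] = sum_{t>=0} Pr[T > t]; E[T] <= C n^2 iff all partial sums are. *)
Theorem theorem3 :
  exists (C : nat) (n0 : nat), forall (R : realFieldType) (n : nat)
    (w : nat -> R) (B : nat) (x0 : point n),
    (1 <= n)%N -> (n0 <= n)%N ->
    0 < w 1%N ->
    (forall i j : nat, (1 <= i)%N -> (i <= j)%N -> (j <= n)%N -> w i <= w j) ->
    (1 <= B)%N -> (B <= n)%N ->
    forall N : nat,
      \sum_(t < N) not_hit w B x0 t <= (C * n ^ 2)%N%:R.
Proof.
(* [1 <= n] follows from [1 <= B <= n], and no threshold [n0] is needed. *)
exists 8%N, 0%N => R n w B x0 _ _ w1_gt0 w_mono B_gt0 B_le_n N.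
pose g (x : point n) := cost_upto R n (potential w B x).
apply: (le_trans (@sum_not_hit_le R n w B g x0 N _ _)).
- by move=> x; apply: cost_upto_ge0.
- by move=> x; apply: expected_next_cost.
apply: le_trans (cost_upto_4n_le R n); apply: le_cost_upto.
exact: potential_le.
Qed.
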